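(* Let $(p_{ij})_{i,j\in\{0,1\}}$ be a transition matrix with all $p_{ij}\in(0,1)$, and for $i\in\{0,1\}$, $n\in\mathbb N_0$ let $I_n^i$ be binomially $B(n,p_{i0})$ distributed. Let $(a_i(n))_{n\in\mathbb N_0}$, $(\varepsilon_i(n))_{n\in\mathbb N_0}$, $i\in\{0,1\}$, be real sequences satisfying $$a_i(n)=\mathbb E[a_0(I_n^i)]+\mathbb E[a_1(n-I_n^i)]+\varepsilon_i(n),\qquad i\in\{0,1\},\ n\in\mathbb N.$$ If $\varepsilon_i(n)=O(n^\alpha)$ for some $\alpha\in\mathbb R$ and both $i\in\{0,1\}$, then as $n\to\infty$, $a_i(n)=O(n)$ if $\alpha<1$, $a_i(n)=O(n^\alpha)$ if $\alpha>1$, and $a_i(n)=O(n\log n)$ if $\alpha=1$. *)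

From mathcomp Require Import all_boot all_order all_algebra.
From mathcomp Require Import reals exp.
Set Implicit Arguments. Unset Strict Implicit. Unset Printing Implicit Defensive.
Import Order.TTheory GRing.Theory Num.Theory.
Local Open Scope ring_scope.

Definition binom_exp (R : realType) (q : R) (n : nat) (f : nat -> R) : R :=
  \sum_(k < n.+1) ('C(n, k))%:R * q ^+ k * (1 - q) ^+ (n - k) * f k.

Definition bigO_seq (R : realType) (u v : nat -> R) : Prop :=
  exists C : R, exists N : nat, forall n : nat, (N <= n)%N -> `|u n| <= C * v n.

(* A comparison principle drives the proof: if f satisfies
   E[f(I)] + E[f(n - I)] + |eps(n)| <= f(n) for I ~ B(n, q_i), both i, and all
   large n, then f dominates |a_i|, because the two terms in which a(n) refers to
   itself carry total weight q^n + (1 - q)^n < 1.  Supersolutions are taken of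
   the form f = D h + B n + K; the linear part is exactly reproduced, so all that
   is needed is a negative drift E[h(I)] + E[h(n - I)] - h(n) <= - r w(n), with
   w(n) the order of eps.  For h(k) = - k^b (b < 1), k^a (a > 1) and k ln k this
   drift comes from second-order bounds of t^b and t ln t around t = 1, applied
   at t = I / (n q), whose variance (1 - q) / (n q) is O(1/n); the leading
   constants are |q^b + (1 - q)^b - 1| and the binary entropy of q. *)

From mathcomp Require Import all_boot all_order all_algebra.
From mathcomp Require Import reals exp.
From mathcomp.algebra_tactics Require Import ring lra.
Set Implicit Arguments.
Unset Strict Implicit.
Unset Printing Implicit Defensive.

Import Order.TTheory GRing.Theory Num.Theory.
Local Open Scope ring_scope.

Section BinomExp.
Variable R : realType.
Implicit Types (q c : R) (f g : nat -> R).

Lemma binom_expE q n f : binom_exp q n f =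
  \sum_(0 <= k < n.+1) ('C(n, k))%:R * q ^+ k * (1 - q) ^+ (n - k) * f k.
Proof. by rewrite /binom_exp big_mkord. Qed.

Lemma binom_exp0 q f : binom_exp q 0 f = f 0%N.
Proof. by rewrite /binom_exp big_ord_recl big_ord0 /= bin0 !expr0 !mul1r addr0. Qed.

Lemma binom_exp_ext q n f g : (forall k, (k <= n)%N -> f k = g k) ->
  binom_exp q n f = binom_exp q n g.
Proof.
by move=> fg; rewrite !binom_expE !big_nat; apply: eq_bigr => k /andP[_ /fg ->].
Qed.

Lemma binom_expD q n f g :
  binom_exp q n (fun k => f k + g k) = binom_exp q n f + binom_exp q n g.
Proof. by rewrite /binom_exp -big_split; apply: eq_bigr => k _; rewrite mulrDr. Qed.

Lemma binom_expZ q n c f :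
  binom_exp q n (fun k => c * f k) = c * binom_exp q n f.
Proof. by rewrite /binom_exp mulr_sumr; apply: eq_bigr => k _; rewrite mulrCA. Qed.

Lemma binom_expS q n f : binom_exp q n.+1 f =
  q * binom_exp q n (fun k => f k.+1) + (1 - q) * binom_exp q n f.
Proof.
rewrite /binom_exp big_ord_recl !mulr_sumr.
under eq_bigr do rewrite lift0 binS natrD !mulrDl.
rewrite big_split /= addrA addrC; congr (_ + _).
  by apply: eq_bigr => i _; rewrite subSS exprS; ring.
rewrite big_ord_recr /= (bin_small (ltnSn n)) !mul0r addr0 [RHS]big_ord_recl /=.
congr (_ + _); first by rewrite !bin0 !subn0 exprS; ring.
apply: eq_bigr => i _.
rewrite /bump leq0n add1n subSS -(subnSK (ltn_ord i)).
by rewrite [(1 - q) ^+ _.+1]exprS; ring.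
Qed.

Lemma binom_expC q n c : binom_exp q n (fun=> c) = c.
Proof.
elim: n => [|n IHn]; first by rewrite binom_exp0.
by rewrite binom_expS IHn; ring.
Qed.

Lemma binom_exp_id q n : binom_exp q n (fun k => k%:R) = n%:R * q.
Proof.
elim: n => [|n IHn]; first by rewrite binom_exp0 mul0r.
rewrite binom_expS IHn (binom_exp_ext q (g := fun k => k%:R + 1)) => [|k _].
  by rewrite binom_expD binom_expC IHn -natr1; ring.
by rewrite -natr1.
Qed.

Lemma binom_exp_sqr q n :
  binom_exp q n (fun k => k%:R ^+ 2) = n%:R * q * (1 - q) + (n%:R * q) ^+ 2.
Proof.
elim: n => [|n IHn]; first by rewrite binom_exp0 !mul0r expr0n addr0.
rewrite binom_expS IHn (binom_exp_ext q (g := fun k => k%:R ^+ 2 + (2 * k%:R + 1))).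
  by rewrite !binom_expD binom_expC binom_expZ IHn binom_exp_id -natr1; ring.
by move=> k _; rewrite -natr1; ring.
Qed.

Lemma binom_exp_quad q n c0 c1 c2 : n%:R * q != 0 ->
  binom_exp q n (fun k => c0 + c1 * (k%:R / (n%:R * q) - 1)
                            + c2 * (k%:R / (n%:R * q) - 1) ^+ 2)
  = c0 + c2 * (1 - q) / (n%:R * q).
Proof.
set m := n%:R * q => m0.
rewrite (binom_exp_ext q (g := fun k => (c0 - c1 + c2) + ((c1 - 2 * c2) / m) * k%:R
                                       + (c2 / m ^+ 2) * k%:R ^+ 2)).
  by rewrite !binom_expD !binom_expC !binom_expZ binom_exp_id binom_exp_sqr -/m; field.
by move=> k _; field.
Qed.

Lemma binom_exp_le q n f g : 0 <= q <= 1 -> (forall k, (k <= n)%N -> f k <= g k) ->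
  binom_exp q n f <= binom_exp q n g.
Proof.
move=> /andP[q0 q1] fg; rewrite !binom_expE !big_nat; apply: ler_sum => k /andP[_ kn].
by apply: ler_wpM2l; [rewrite !mulr_ge0 ?exprn_ge0 ?subr_ge0 | exact: fg].
Qed.

Lemma binom_exp_norm q n f : 0 <= q <= 1 ->
  `|binom_exp q n f| <= binom_exp q n (fun k => `|f k|).
Proof.
move=> /andP[q0 q1]; apply: le_trans (ler_norm_sum _ _ _) _.
apply: ler_sum => k _; rewrite normrM ger0_norm //.
by rewrite !mulr_ge0 ?exprn_ge0 ?subr_ge0.
Qed.

Lemma binom_exp_rev q n f :
  binom_exp q n (fun k => f (n - k)%N) = binom_exp (1 - q) n f.
Proof.
rewrite /binom_exp (reindex_inj rev_ord_inj) /=; apply: eq_bigr => k _.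
have kn : (k <= n)%N by rewrite -ltnS.
by rewrite subSS subKn // bin_sub // subKr; ring.
Qed.

(* Isolates the term k = n, in which the recurrence refers to the unknown itself. *)
Lemma binom_exp_le_last q n f g : 0 <= q <= 1 -> (forall k, (k < n)%N -> f k <= g k) ->
  binom_exp q n f <= binom_exp q n g + q ^+ n * (f n - g n).
Proof.
move=> /andP[q0 q1] fg; rewrite -subr_ge0.
have -> : binom_exp q n g + q ^+ n * (f n - g n) - binom_exp q n f =
    \sum_(0 <= k < n) ('C(n, k))%:R * q ^+ k * (1 - q) ^+ (n - k) * (g k - f k).
  rewrite !binom_expE !big_nat_recr //= binn subnn !expr0 !mul1r !mulr1.
  by under [RHS]eq_bigr do rewrite mulrBr; rewrite sumrB; ring.
rewrite big_nat; apply: sumr_ge0 => k /andP[_ kn].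
by rewrite !mulr_ge0 ?exprn_ge0 ?subr_ge0 ?fg.
Qed.

End BinomExp.

Section PowerBounds.
Variable R : realType.
Implicit Types (b t x : R).

Lemma gtr_powR x : 0 < x < 1 -> {homo powR x : b c /~ b < c}.
Proof.
move=> /andP[x0 x1] b c bc; rewrite /powR gt_eqF // ltr_expR.
by have := ln_lt0 (ltac:(by rewrite x0 x1) : 0 < x < 1); nra.
Qed.

(* Young's inequality for the conjugate exponents 1/b and 1/(1-b), applied to t^b and 1. *)
Lemma powR_le_tangent b t : 0 <= b <= 1 -> 0 <= t -> t `^ b <= 1 + b * (t - 1).
Proof.
move=> /andP[b0 b1] t0.
have [->|b_neq0] := eqVneq b 0; first by rewrite powRr0 mul0r addr0.
have [->|b_neq1] := eqVneq b 1; first by rewrite powRr1 // mul1r; lra.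
have b_gt0 : 0 < b by rewrite lt0r b_neq0.
have b_lt1 : b < 1 by rewrite lt_neqAle b_neq1.
have := @conjugate_powR R (t `^ b) 1 b^-1 (1 - b)^-1 (powR_ge0 _ _) ler01.
rewrite !invr_gt0 subr_gt0 !invrK b_gt0 b_lt1 addrC subrK => /(_ isT isT erefl).
by rewrite mulr1 -powRrM mulfV // powRr1 // powR1; lra.
Qed.

Lemma powR_ge_quad b t : 0 < b < 1 -> 0 <= t ->
  1 + b * (t - 1) + (b - 1) * (t - 1) ^+ 2 <= t `^ b.
Proof.
move=> /andP[b0 b1] t0.
have [->|t_neq0] := eqVneq t 0; first by rewrite powR0 ?gt_eqF //; nra.
have t_gt0 : 0 < t by rewrite lt0r t_neq0.
have t_split : t `^ b * t `^ (1 - b) = t.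
  by rewrite -powRD ?t_neq0 ?implybT // addrC subrK powRr1.
have co_le : t `^ (1 - b) <= 1 + (1 - b) * (t - 1).
  by apply: powR_le_tangent => //; lra.
have co_gt0 : 0 < 1 + (1 - b) * (t - 1) by nra.
rewrite -(ler_pM2r co_gt0); apply: le_trans (_ : t <= _).
  suff : 0 <= (1 - b) ^+ 2 * (t - 1) ^+ 2 * t by nra.
  by apply: mulr_ge0; [apply: mulr_ge0; exact: sqr_ge0 | exact: ltW].
by rewrite -{1}t_split ler_wpM2l ?powR_ge0.
Qed.

Lemma powR_le_quad b t : 1 <= b <= 2 -> 0 <= t ->
  t `^ b <= 1 + b * (t - 1) + (b - 1) * (t - 1) ^+ 2.
Proof.
move=> /andP[b1 b2] t0.
rewrite -mulr_powRB1 //; last lra.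
have tangent := @powR_le_tangent (b - 1) t (ltac:(apply/andP; split; lra)) t0.
apply: (le_trans (ler_wpM2l t0 tangent)); lra.
Qed.

Lemma mulr_ln_le x m : 0 <= x -> 0 < m -> x * ln x <= x * ln m + x * (x - m) / m.
Proof.
rewrite le_eqVlt => /predU1P[<-|x0] m0; first by rewrite !mul0r add0r.
have ln_ratio : ln (x / m) <= x / m - 1.
  by rewrite -[X in ln X](subrK 1) addrC le_ln1Dx // ltrBrDr addrC subrr divr_gt0.
rewrite ln_div ?posrE // in ln_ratio.
have := ler_wpM2l (ltW x0) ln_ratio.
have -> : x * (x / m - 1) = x * (x - m) / m by field; rewrite gt_eqF.
lra.
Qed.

Lemma natr_powR_ge1 (n : nat) b : (0 < n)%N -> 0 <= b -> 1 <= n%:R `^ b.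
Proof.
move=> n0 b0; have n1 : 1 <= n%:R :> R by rewrite ler1n.
by have := ler_powR n1 b0; rewrite powRr0.
Qed.

Lemma powR_divM x y b : 0 <= x -> 0 <= y ->
  (x * y) `^ b / (x * y) = x `^ b / x * (y `^ b / y).
Proof. by move=> x0 y0; rewrite powRM // invfM; ring. Qed.

End PowerBounds.

Section BinomMoments.
Variables (R : realType) (q : R) (n : nat).
Hypotheses (q01 : 0 < q < 1) (n_gt0 : (0 < n)%N).

Let m := n%:R * q.

Let m_gt0 : 0 < m.
Proof. by case/andP: q01 => q0 _; rewrite mulr_gt0 ?ltr0n. Qed.

Let q01W : 0 <= q <= 1.
Proof. by case/andP: q01 => q0 q1; rewrite !ltW. Qed.

Let powR_split b k : k%:R `^ b = m `^ b * (k%:R / m) `^ b.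
Proof. by rewrite mulrC -powRM ?divfK ?gt_eqF // ?divr_ge0 // ltW. Qed.

Lemma binom_exp_powR_ge b : 0 < b < 1 ->
  m `^ b - m `^ b / m <= binom_exp q n (fun k => k%:R `^ b).
Proof.
move=> b01; have /andP[b0 b1] := b01.
have pointwise k : m `^ b * (1 + b * (k%:R / m - 1) + (b - 1) * (k%:R / m - 1) ^+ 2)
    <= k%:R `^ b.
  rewrite powR_split ler_pM2l ?powR_gt0 //.
  by apply: powR_ge_quad => //; rewrite divr_ge0 // ltW.
apply: le_trans _ (binom_exp_le q01W (fun k _ => pointwise k)).
rewrite binom_expZ binom_exp_quad ?gt_eqF // -/m.
have : 0 <= ((b - 1) * (1 - q) + 1) * (m `^ b / m).
  by rewrite mulr_ge0 ?divr_ge0 ?powR_ge0 ?ltW //; case/andP: q01; nra.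
lra.
Qed.

Lemma binom_exp_powR_le b : 1 <= b <= 2 ->
  binom_exp q n (fun k => k%:R `^ b) <= m `^ b + m `^ b / m.
Proof.
move=> /andP[b1 b2].
have pointwise k : k%:R `^ b
    <= m `^ b * (1 + b * (k%:R / m - 1) + (b - 1) * (k%:R / m - 1) ^+ 2).
  rewrite powR_split ler_pM2l ?powR_gt0 //.
  by apply: powR_le_quad; [rewrite b1 b2 | rewrite divr_ge0 // ltW].
apply: le_trans (binom_exp_le q01W (fun k _ => pointwise k)) _.
rewrite binom_expZ binom_exp_quad ?gt_eqF // -/m.
have : 0 <= (1 - (b - 1) * (1 - q)) * (m `^ b / m).
  by rewrite mulr_ge0 ?divr_ge0 ?powR_ge0 ?ltW //; case/andP: q01; nra.
lra.
Qed.

Lemma binom_exp_xlnx_le :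
  binom_exp q n (fun k => k%:R * ln k%:R) <= m * ln m + 1.
Proof.
have pointwise k : k%:R * ln k%:R
    <= m * ln m + (m * ln m + m) * (k%:R / m - 1) + m * (k%:R / m - 1) ^+ 2.
  apply: le_trans (mulr_ln_le (ler0n _ k) m_gt0) _.
  by rewrite le_eqVlt; apply/orP; left; apply/eqP; field; rewrite gt_eqF.
apply: le_trans (binom_exp_le q01W (fun k _ => pointwise k)) _.
rewrite binom_exp_quad ?gt_eqF // -/m [m * _ / m]mulrAC mulfV ?gt_eqF // mul1r.
by case/andP: q01; lra.
Qed.

End BinomMoments.

Definition split_drift (R : realType) (q : R) (h : nat -> R) (n : nat) : R :=
  binom_exp q n h + binom_exp q n (fun k => h (n - k)%N) - h n.

Lemma split_driftE (R : realType) (q : R) h n :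
  split_drift q h n = binom_exp q n h + binom_exp (1 - q) n h - h n.
Proof. by rewrite /split_drift binom_exp_rev. Qed.

Lemma split_driftN (R : realType) (q : R) h n :
  split_drift q (fun k => - h k) n = - split_drift q h n.
Proof.
rewrite /split_drift (binom_exp_ext q (g := fun k => -1 * h k)) => [|k _]; last by ring.
rewrite (binom_exp_ext q (f := fun k => - h (n - k)%N) (g := fun k => -1 * h (n - k)%N)).
  by rewrite !binom_expZ; ring.
by move=> k _; ring.
Qed.

Lemma split_drift_affine (R : realType) (q : R) h c B K n :
  split_drift q (fun k => c * h k + B * k%:R + K) n = c * split_drift q h n + K.
Proof. by rewrite !split_driftE !binom_expD !binom_expZ !binom_expC !binom_exp_id; ring. Qed.

Lemma eventually_half_le (R : realType) (rho kappa : R) (u w : nat -> R) :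
  0 < rho -> (forall n, 0 <= w n) ->
  (forall n, (0 < n)%N -> (rho - kappa / n%:R) * w n <= u n) ->
  exists N, forall n, (N <= n)%N -> rho / 2 * w n <= u n.
Proof.
move=> rho0 w0 lb; exists (Num.truncn (2 * kappa / rho)).+1 => n Nn.
have n0 : (0 < n)%N by apply: leq_trans Nn.
apply: le_trans (lb n n0); apply: ler_wpM2r => //.
have : 2 * kappa / rho < n%:R.
  by apply: lt_le_trans (truncnS_gt _) _; rewrite ler_nat.
rewrite ltr_pdivrMr // => kappa_lt.
have n_gt0 : 0 < n%:R :> R by rewrite ltr0n.
suff : kappa / n%:R <= rho / 2 by lra.
by rewrite ler_pdivrMr //; lra.
Qed.

Section SplitDriftBounds.
Variables (R : realType) (q : R).
Hypothesis q01 : 0 < q < 1.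

Let q'01 : 0 < 1 - q < 1.
Proof. by case/andP: q01 => q0 q1; apply/andP; split; lra. Qed.

Lemma split_drift_powR_lt1 b : 0 < b < 1 -> exists2 r, 0 < r &
  exists N, forall n, (N <= n)%N -> r * n%:R `^ b <= split_drift q (fun k => k%:R `^ b) n.
Proof.
move=> b01; have /andP[_ b1] := b01.
pose rho := q `^ b + (1 - q) `^ b - 1.
pose kappa := q `^ b / q + (1 - q) `^ b / (1 - q).
have rho_gt0 : 0 < rho.
  have := gtr_powR q01 b1; have := gtr_powR q'01 b1.
  by case/andP: q01 => q0 q1; rewrite !powRr1 ?subr_ge0 ?ltW // /rho; lra.
exists (rho / 2); first by rewrite divr_gt0.
apply: (eventually_half_le (kappa := kappa)) => // [n|n n0]; first exact: powR_ge0.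
have lo := binom_exp_powR_ge q01 n0 b01; have lo' := binom_exp_powR_ge q'01 n0 b01.
case/andP: q01 => q0 q1.
rewrite powR_divM ?powRM ?ler0n ?(ltW q0) // in lo.
rewrite powR_divM ?powRM ?ler0n ?subr_ge0 ?(ltW q1) // in lo'.
rewrite split_driftE /rho /kappa; lra.
Qed.

Lemma split_drift_powR_gt1 a : 1 < a -> exists2 r, 0 < r &
  exists N, forall n, (N <= n)%N -> split_drift q (fun k => k%:R `^ a) n <= - (r * n%:R `^ a).
Proof.
move=> a1; pose b := Num.min a 2.
have b1 : 1 < b by rewrite lt_min a1 /=; lra.
have b12 : 1 <= b <= 2 by rewrite ge_min lexx orbT ltW.
have ba : b <= a by rewrite ge_min lexx.
pose rho := 1 - (q `^ b + (1 - q) `^ b).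
pose kappa := q `^ b / q + (1 - q) `^ b / (1 - q).
have rho_gt0 : 0 < rho.
  have := gtr_powR q01 b1; have := gtr_powR q'01 b1.
  by case/andP: q01 => q0 q1; rewrite !powRr1 ?subr_ge0 ?ltW // /rho; lra.
exists (rho / 2); first by rewrite divr_gt0.
have [N hN] : exists N, forall n, (N <= n)%N ->
    rho / 2 * n%:R `^ a <= - split_drift q (fun k => k%:R `^ a) n.
  apply: (eventually_half_le (kappa := kappa)) => // [n|n n0]; first exact: powR_ge0.
  have nab : n%:R `^ (a - b) * n%:R `^ b = n%:R `^ a :> R.
    by rewrite -powRD ?subrK // gt_eqF //; lra.
  have up p : 0 < p < 1 -> binom_exp p n (fun k => k%:R `^ a)
      <= p `^ b * n%:R `^ a + p `^ b / p * (n%:R `^ a / n%:R).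
    move=> p01; have /andP[p0 _] := p01.
    apply: (@le_trans _ _ (n%:R `^ (a - b) * binom_exp p n (fun k => k%:R `^ b))).
      rewrite -binom_expZ; apply: binom_exp_le; first by case/andP: p01 => ? ?; rewrite !ltW.
      move=> k kn; rewrite -{1}(subrK b a) powRD; last by rewrite subrK gt_eqF //; lra.
      apply: ler_wpM2r; first exact: powR_ge0.
      by apply: ge0_ler_powR; rewrite ?nnegrE ?ler0n ?ler_nat //; lra.
    apply: le_trans (ler_wpM2l (powR_ge0 _ _) (binom_exp_powR_le p01 n0 b12)) _.
    by rewrite powR_divM ?powRM ?ler0n ?(ltW p0) // -nab; lra.
  have lo := up q q01; have lo' := up (1 - q) q'01.
  by rewrite split_driftE /rho /kappa; lra.
by exists N => n /hN; lra.
Qed.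

Lemma split_drift_xlnx : exists2 r, 0 < r &
  exists N, forall n, (N <= n)%N ->
    split_drift q (fun k => k%:R * ln k%:R) n <= - (r * n%:R).
Proof.
have /andP[q0 q1] := q01.
pose H := - (q * ln q + (1 - q) * ln (1 - q)).
have H_gt0 : 0 < H.
  have := ln_lt0 q01; have := ln_lt0 q'01; rewrite /H; nra.
exists (H / 2); first by rewrite divr_gt0.
have [N hN] : exists N, forall n, (N <= n)%N ->
    H / 2 * n%:R <= - split_drift q (fun k => k%:R * ln k%:R) n.
  apply: (eventually_half_le (kappa := 2)) => // n n0.
  have n_gt0 : 0 < n%:R :> R by rewrite ltr0n.
  have up := binom_exp_xlnx_le q01 n0; have up' := binom_exp_xlnx_le q'01 n0.
  rewrite lnM ?posrE // in up; rewrite lnM ?posrE ?subr_gt0 // in up'.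
  have -> : (H - 2 / n%:R) * n%:R = H * n%:R - 2 by field; rewrite gt_eqF.
  rewrite split_driftE /H; lra.
by exists N => n /hN; lra.
Qed.

End SplitDriftBounds.

Lemma ord2_ind (P : 'I_2 -> Prop) : P 0 -> P 1 -> forall i, P i.
Proof.
move=> P0 P1 [[|[|//]] i_lt2].
  by rewrite (_ : Ordinal i_lt2 = 0) //; apply: val_inj.
by rewrite (_ : Ordinal i_lt2 = 1) //; apply: val_inj.
Qed.

Lemma bigO_seq_ord2 (R : realType) (u : 'I_2 -> nat -> R) (v : nat -> R) :
  (forall n, 0 <= v n) -> (forall i, bigO_seq (u i) v) ->
  exists2 C, 0 <= C & exists N, forall i n, (N <= n)%N -> `|u i n| <= C * v n.
Proof.
move=> v0 uO; have [C0 [N0 u0]] := uO 0; have [C1 [N1 u1]] := uO 1.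
exists (Num.max 0 (Num.max C0 C1)); first by rewrite le_max lexx.
exists (maxn N0 N1); elim/ord2_ind => n; rewrite geq_max => /andP[n0 n1].
  by apply: le_trans (u0 n n0) _; rewrite ler_wpM2r // !le_max lexx !orbT.
by apply: le_trans (u1 n n1) _; rewrite ler_wpM2r // !le_max lexx !orbT.
Qed.

Lemma nonpos_of_subfixpoint2 (R : realType) (d x y : 'I_2 -> R) :
  (forall j, 0 <= x j) -> (forall j, 0 <= y j) -> (forall j, x j + y j < 1) ->
  (forall j, d j <= x j * d 0 + y j * d 1) -> forall j, d j <= 0.
Proof.
move=> x0 y0 xy1 dle.
move: (dle 0) (dle 1) (x0 0) (x0 1) (y0 0) (y0 1) (xy1 0) (xy1 1) => ? ? ? ? ? ? ? ?.
have [d01|d10] := lerP (d 0) (d 1).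
  have d1 : d 1 <= 0 by nra.
  by elim/ord2_ind; lra.
have d0 : d 0 <= 0 by nra.
by elim/ord2_ind; lra.
Qed.

Section TwoTypeRecurrence.
Variables (R : realType) (q : 'I_2 -> R) (a eps : 'I_2 -> nat -> R).
Hypothesis q01 : forall i, 0 < q i < 1.
Hypothesis rec : forall (i : 'I_2) n, (0 < n)%N ->
  a i n = binom_exp (q i) n (a 0) + binom_exp (q i) n (fun k => a 1 (n - k)%N) + eps i n.

Lemma abs_le_supersolution f N0 : (1 < N0)%N ->
  (forall i n, (n < N0)%N -> `|a i n| <= f n) ->
  (forall i n, (N0 <= n)%N -> split_drift (q i) f n + `|eps i n| <= 0) ->
  forall i n, `|a i n| <= f n.
Proof.
move=> N0_gt1 init super i n; elim/ltn_ind: n i => n IHn i.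
have [/init //|N0n] := ltnP n N0.
have n_gt1 : (1 < n)%N by apply: leq_trans N0n.
suff : forall j, `|a j n| - f n <= 0 by move=> /(_ i); lra.
apply: (nonpos_of_subfixpoint2 (x := fun j => q j ^+ n) (y := fun j => (1 - q j) ^+ n)) => j;
  have /andP[q0 q1] := q01 j.
- by rewrite exprn_ge0 ?ltW.
- by rewrite exprn_ge0 // subr_ge0 ltW.
- have : q j ^+ n < q j by rewrite ltr_iXnr.
  have : (1 - q j) ^+ n < 1 - q j by rewrite ltr_iXnr //; lra.
  lra.
have qW : 0 <= q j <= 1 by rewrite !ltW.
have q'W : 0 <= 1 - q j <= 1 by apply/andP; split; lra.
have lt0 : binom_exp (q j) n (fun k => `|a 0 k|)
    <= binom_exp (q j) n f + q j ^+ n * (`|a 0 n| - f n).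
  by apply: binom_exp_le_last => // k /IHn.
have lt1 : binom_exp (q j) n (fun k => `|a 1 (n - k)%N|)
    <= binom_exp (q j) n (fun k => f (n - k)%N) + (1 - q j) ^+ n * (`|a 1 n| - f n).
  rewrite (binom_exp_rev (q j) n (fun k => `|a 1 k|)) binom_exp_rev.
  by apply: binom_exp_le_last => // k /IHn.
have := binom_exp_norm n (a 0) qW; have := binom_exp_norm n (fun k => a 1 (n - k)%N) qW.
have := super j n N0n; rewrite /split_drift (rec j) ?(ltnW n_gt1) //.
set E0 := binom_exp _ _ (a 0); set E1 := binom_exp _ _ (fun k => a 1 _).
have := ler_normD (E0 + E1) (eps j n); have := ler_normD E0 E1; lra.
Qed.

Lemma abs_le_of_drift (h : nat -> R) c N1 : h 0%N = 0 ->
  (forall i n, (N1 <= n)%N ->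
     c * split_drift (q i) h n + (`|a 0 0%N| + `|a 1 0%N|) + `|eps i n| <= 0) ->
  exists2 B, 0 <= B & forall i n, (0 < n)%N -> `|a i n| <= c * h n + B * n%:R.
Proof.
move=> h0 drift; pose K := `|a 0 0%N| + `|a 1 0%N|; pose N0 := maxn 2 N1.
pose B := \sum_(m < N0) (`|a 0 m| + `|a 1 m| + `|c * h m|).
have B_ge0 : 0 <= B by apply: sumr_ge0 => m _; rewrite !addr_ge0.
have K_ge0 : 0 <= K by rewrite addr_ge0.
have abs_le_K0 i n : `|a i n| <= `|a 0 n| + `|a 1 n|.
  by elim/ord2_ind: i; rewrite ?lerDl ?lerDr.
have B_ge m : (m < N0)%N -> `|a 0 m| + `|a 1 m| + `|c * h m| <= B.
  move=> mN0; rewrite /B (bigD1 (Ordinal mN0)) //= lerDl.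
  by apply: sumr_ge0 => k _; rewrite !addr_ge0.
pose f k := c * h k + B * k%:R + K.
have N0_gt1 : (1 < N0)%N by rewrite leq_max.
have init j m : (m < N0)%N -> `|a j m| <= f m.
  case: m => [_|m /B_ge Bm]; first by rewrite /f h0 !mulr0 !add0r abs_le_K0.
  have Bm' : B <= B * m.+1%:R by rewrite ler_peMr // ler1n.
  have := abs_le_K0 j m.+1; have := ler_norm (- (c * h m.+1)).
  by rewrite normrN /f; lra.
have super j m : (N0 <= m)%N -> split_drift (q j) f m + `|eps j m| <= 0.
  move=> N0m; have /(drift j) drift_m : (N1 <= m)%N.
    by apply: leq_trans N0m; rewrite leq_maxr.
  by rewrite split_drift_affine.
exists (B + K); rewrite ?addr_ge0 // => i n n0.
have Kn : K <= K * n%:R by rewrite ler_peMr // ler1n.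
have := abs_le_supersolution N0_gt1 init super i n.
by rewrite /f mulrDl; lra.
Qed.

Lemma bigO_of_drift (h w : nat -> R) Ce Ne : h 0%N = 0 ->
  (forall n, (0 < n)%N -> 1 <= w n) -> 0 <= Ce ->
  (forall i n, (Ne <= n)%N -> `|eps i n| <= Ce * w n) ->
  (forall i, exists2 r, 0 < r &
     exists N, forall n, (N <= n)%N -> split_drift (q i) h n <= - (r * w n)) ->
  exists2 D, 0 <= D &
    exists2 B, 0 <= B & forall i n, (0 < n)%N -> `|a i n| <= D * h n + B * n%:R.
Proof.
move=> h0 w_ge1 Ce0 epsO drift.
have [r0 r0_gt0 [N0 drift0]] := drift 0; have [r1 r1_gt0 [N1 drift1]] := drift 1.
pose K := `|a 0 0%N| + `|a 1 0%N|; have K_ge0 : 0 <= K by rewrite addr_ge0.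
pose D := (K + Ce) / r0 + (K + Ce) / r1.
have KCe_ge0 : 0 <= K + Ce by rewrite addr_ge0.
have D_ge0 : 0 <= D by rewrite addr_ge0 // divr_ge0 // ltW.
have D_r0 : K + Ce <= D * r0.
  by rewrite mulrDl divfK ?gt_eqF // lerDl mulr_ge0 // ?divr_ge0 // ltW.
have D_r1 : K + Ce <= D * r1.
  by rewrite mulrDl [_ / r1 * r1]divfK ?gt_eqF // lerDr mulr_ge0 // ?divr_ge0 // ltW.
exists D => //; apply: (abs_le_of_drift (N1 := maxn (maxn 1 Ne) (maxn N0 N1))) => // i n.
rewrite !geq_max => /andP[/andP[n_gt0 Nen] /andP[N0n N1n]].
have step j r : 0 < r -> K + Ce <= D * r -> split_drift (q j) h n <= - (r * w n) ->
    D * split_drift (q j) h n + K + `|eps j n| <= 0.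
  move=> r_gt0 D_r drift_j; have w1 := w_ge1 n n_gt0; have eps_j := epsO j n Nen.
  have Ddrift : D * split_drift (q j) h n <= - (D * r * w n).
    by rewrite -mulrA -mulrN ler_wpM2l.
  have KCe_w : (K + Ce) * w n <= D * r * w n.
    by apply: ler_wpM2r => //; apply: le_trans w1.
  have K_w : K <= K * w n by rewrite ler_peMr.
  lra.
elim/ord2_ind: i; first exact: step r0_gt0 D_r0 (drift0 n N0n).
exact: step r1_gt0 D_r1 (drift1 n N1n).
Qed.

Lemma two_type_bigO_lt1 alpha Ce Ne : alpha < 1 -> 0 <= Ce ->
  (forall i n, (Ne <= n)%N -> `|eps i n| <= Ce * n%:R `^ alpha) ->
  forall i, bigO_seq (a i) (fun n => n%:R).
Proof.
move=> alpha_lt1 Ce0 epsO.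
(* Any exponent in (alpha, 1) works; the max with 1/2 keeps it positive. *)
pose b := Num.max alpha 2^-1.
have b01 : 0 < b < 1 by rewrite lt_max gt_max alpha_lt1 invr_gt0 /=; lra.
have /andP[b_gt0 _] := b01.
have h0 : - 0%:R `^ b = 0 :> R by rewrite powR0 ?oppr0 // gt_eqF.
have w_ge1 n : (0 < n)%N -> 1 <= n%:R `^ b by move=> n0; rewrite natr_powR_ge1 // ltW.
have epsOb i n : (maxn 1 Ne <= n)%N -> `|eps i n| <= Ce * n%:R `^ b.
  rewrite geq_max => /andP[n0 /(epsO i) epsn]; apply: le_trans epsn _.
  by rewrite ler_wpM2l // ler_powR ?ler1n // le_max lexx.
have drift i : exists2 r, 0 < r & exists N, forall n, (N <= n)%N ->
    split_drift (q i) (fun k => - k%:R `^ b) n <= - (r * n%:R `^ b).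
  have [r r_gt0 [N drift]] := split_drift_powR_lt1 (q01 i) b01.
  by exists r => //; exists N => n /drift; rewrite split_driftN; lra.
have [D D_ge0 [B _ bound]] := bigO_of_drift h0 w_ge1 Ce0 epsOb drift.
move=> i; exists B, 1%N => n n0; apply: le_trans (bound i n n0) _.
by have := mulr_ge0 D_ge0 (powR_ge0 n%:R b); lra.
Qed.

Lemma two_type_bigO_gt1 alpha Ce Ne : 1 < alpha -> 0 <= Ce ->
  (forall i n, (Ne <= n)%N -> `|eps i n| <= Ce * n%:R `^ alpha) ->
  forall i, bigO_seq (a i) (fun n => n%:R `^ alpha).
Proof.
move=> alpha_gt1 Ce0 epsO.
have h0 : 0%:R `^ alpha = 0 :> R by rewrite powR0 // gt_eqF; lra.
have w_ge1 n : (0 < n)%N -> 1 <= n%:R `^ alpha.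
  by move=> n0; rewrite natr_powR_ge1 //; lra.
have drift i := split_drift_powR_gt1 (q01 i) alpha_gt1.
have [D D_ge0 [B B_ge0 bound]] := bigO_of_drift h0 w_ge1 Ce0 epsO drift.
move=> i; exists (D + B), 1%N => n n0; apply: le_trans (bound i n n0) _.
have : n%:R <= n%:R `^ alpha :> R by rewrite le1r_powR ?ler1n // ltW.
by move=> /(ler_wpM2l B_ge0); lra.
Qed.

Lemma two_type_bigO_eq1 Ce Ne : 0 <= Ce ->
  (forall i n, (Ne <= n)%N -> `|eps i n| <= Ce * n%:R) ->
  forall i, bigO_seq (a i) (fun n => n%:R * ln n%:R).
Proof.
move=> Ce0 epsO.
have h0 : 0%:R * ln 0%:R = 0 :> R by rewrite mul0r.
have w_ge1 n : (0 < n)%N -> 1 <= n%:R :> R by rewrite ler1n.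
have drift i := split_drift_xlnx (q01 i).
have [D D_ge0 [B B_ge0 bound]] := bigO_of_drift h0 w_ge1 Ce0 epsO drift.
move=> i; exists (D + B / ln 2), 2%N => n n2; apply: le_trans (bound i n _) _.
  exact: leq_trans n2.
have ln2_gt0 : 0 < ln 2 :> R by rewrite ln_gt0 // ltr1n.
have ln2_le : ln 2 <= ln n%:R :> R.
  by rewrite ler_ln ?posrE ?ler_nat ?ltr0n // (leq_trans _ n2).
rewrite mulrDl lerD2l -(ler_pM2r ln2_gt0).
have -> : B / ln 2 * (n%:R * ln n%:R) * ln 2 = B * n%:R * ln n%:R.
  by field; rewrite gt_eqF.
by rewrite ler_wpM2l ?mulr_ge0.
Qed.

End TwoTypeRecurrence.

Theorem lemma4p1 (R : realType) (p : 'I_2 -> 'I_2 -> R)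
  (a eps : 'I_2 -> nat -> R) (alpha : R) :
  (forall i j, 0 < p i j < 1) ->
  (forall i, p i 0 + p i 1 = 1) ->
  (forall (i : 'I_2) (n : nat), (0 < n)%N ->
     a i n = binom_exp (p i 0) n (a 0)
             + binom_exp (p i 0) n (fun k => a 1 (n - k)%N) + eps i n) ->
  (forall i, bigO_seq (eps i) (fun n => (n%:R : R) `^ alpha)) ->
  (alpha < 1 -> forall i, bigO_seq (a i) (fun n => (n%:R : R))) /\
  (1 < alpha -> forall i, bigO_seq (a i) (fun n => (n%:R : R) `^ alpha)) /\
  (alpha = 1 -> forall i, bigO_seq (a i) (fun n => (n%:R : R) * ln (n%:R))).
Proof.
move=> p01 _ rec epsO.
pose q i := p i 0; have q01 i : 0 < q i < 1 := p01 i 0.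
have [Ce Ce0 [Ne epsOu]] := bigO_seq_ord2 (fun n => powR_ge0 n%:R alpha) epsO.
split; [|split] => [alpha_lt1|alpha_gt1|alpha1].
- exact: (two_type_bigO_lt1 (q := q) q01 rec alpha_lt1 Ce0 epsOu).
- exact: (two_type_bigO_gt1 (q := q) q01 rec alpha_gt1 Ce0 epsOu).
apply: (two_type_bigO_eq1 (q := q) q01 rec Ce0) => i n /epsOu.
by rewrite alpha1 powRr1.
Qed.
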